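(* If $S$ is countable, then $\Omega(\phi)\in\mathcal A_\delta$ for every $\phi\in\mathcal H$.
   Context: Let $\mathcal H$ be a complex Hilbert space. A projection is a bounded self-adjoint idempotent operator; $\wedge_\alpha p_\alpha$ is the projection onto the intersection of ranges. Let $S$ be a set; for each $t\in S$ let $\Gamma(t)$ be a countable set and for $a\in\Gamma(t)$ let $p^t_a$ be a projection on $\mathcal H$ with $\sum_{a\in\Gamma(t)}p^t_a=I$ (strong convergence). Let $p^{t_1,\dots,t_k}_{a_1,\dots,a_k}=\wedge_{i=1}^kp^{t_i}_{a_i}$. Let $\Omega=\prod_{t\in S}\Gamma(t)$, $X_t(\omega)=\omega_t$, $\mathcal A$ the algebra of events $\{(X_{t_1},\dots,X_{t_k})\in G\}$ with $t_i\in S$ and $G\subset\Gamma(t_1)\times\dots\times\Gamma(t_k)$, and $\mathcal A_\delta$ the family of countable intersections of events in $\mathcal A$. For $\phi\in\mathcal H$, $\Omega(\phi)=\{\omega\in\Omega:$ for all $t_1,\dots,t_k\in S$, $p^{t_1,\dots,t_k}_{\omega_{t_1},\dots,\omega_{t_k}}\phi\neq0\}$. *)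

From mathcomp Require Import all_boot all_order all_algebra.
From mathcomp Require Export complex.
From mathcomp Require Export all_classical all_reals.
Export GRing.Theory Num.Theory.

Set Implicit Arguments.
Unset Strict Implicit.
Unset Printing Implicit Defensive.

Local Open Scope ring_scope.
Local Open Scope classical_set_scope.

Section Hilbert.
Variables (R : realType) (H : lmodType R[i]) (ip : H -> H -> R[i]).

Definition inner_product : Prop :=
  [/\ forall (a : R[i]) (x y z : H), ip (a *: x + y) z = a * ip x z + ip y z,
      forall x y, ip y x = (ip x y)^*,
      forall x, 0 <= ip x x
    & forall x, ip x x = 0 -> x = 0].

Definition hnorm (x : H) : R[i] := sqrtC (ip x x).

Definition complete_ip : Prop :=
  forall u : nat -> H,
    (forall e : R[i], 0 < e -> exists N, forall m n, (N <= m)%N -> (N <= n)%N ->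
        hnorm (u m - u n) < e) ->
    exists l : H, forall e : R[i], 0 < e -> exists N, forall n, (N <= n)%N ->
        hnorm (u n - l) < e.

Definition hilbert_space : Prop := inner_product /\ complete_ip.

Definition projection (p : H -> H) : Prop :=
  [/\ forall (a : R[i]) (x y : H), p (a *: x + y) = a *: p x + p y,
      exists M : R[i], forall x, hnorm (p x) <= M * hnorm x,
      forall x y, ip (p x) y = ip x (p y)
    & forall x, p (p x) = p x].

(* q = /\_{i<k} ps i : the projection onto the intersection of the ranges
   (the range of a projection is its set of fixed points) *)
Definition is_meet k (ps : 'I_k -> H -> H) (q : H -> H) : Prop :=
  projection q /\ forall x, q x = x <-> (forall i, ps i x = x).

(* family of projections (p_a)_{a in G} with sum_a p_a = I, strongly
   (unconditional convergence over finite subsets of the countable set G) *)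
Definition resolution_of_identity (G : countType) (p : G -> H -> H) : Prop :=
  (forall a, projection (p a)) /\
  forall (x : H) (e : R[i]), 0 < e -> exists s0 : seq G,
    forall s : seq G, uniq s -> {subset s0 <= s} ->
      hnorm (x - \sum_(a <- s) p a x) < e.

End Hilbert.

Section Events.
Variables (S : Type) (Gamma : S -> countType).

(* Omega = prod_{t in S} Gamma(t) ; X_t omega = omega t *)
Definition Omega := forall t : S, Gamma t.

Definition event_A (E : set Omega) : Prop :=
  exists (k : nat) (ts : 'I_k -> S) (G : set (forall i : 'I_k, Gamma (ts i))),
    E = [set w : Omega | G (fun i => w (ts i))].

Definition event_A_delta (E : set Omega) : Prop :=
  exists F : nat -> set Omega, (forall n, event_A (F n)) /\
    E = \bigcap_n F n.

Definition Omega_phi (R : realType) (H : lmodType R[i]) (ip : H -> H -> R[i])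
  (p : forall t : S, Gamma t -> H -> H) (phi : H) : set Omega :=
  [set w : Omega | forall (k : nat) (ts : 'I_k.+1 -> S) (q : H -> H),
     is_meet ip (fun i => p (ts i) (w (ts i))) q -> q phi <> 0].

End Events.

From mathcomp Require Import all_boot all_order all_algebra.
From mathcomp Require Import complex all_classical all_reals.
Local Open Scope ring_scope.
Local Open Scope classical_set_scope.

(* Omega(phi) is the intersection, over all finite nonempty families ts of
   times, of the cylinder event on which every meet of the projections
   p^{ts}_{w(ts)} is nonzero at phi.  When S is countable these families form
   a countable set, so Omega(phi) is a countable intersection of events of A.
   No property of the Hilbert space or of the projections is needed. *)

Section Events.
Variables (S : Type) (Gamma : S -> countType).

Lemma event_A_setT : event_A [set: Omega Gamma].
Proof.
exists 0%N, (fun i : 'I_0 => False_rect S (notF (ltn_ord i))), setT.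
by apply/seteqP; split.
Qed.

Lemma event_A_delta_bigcap (I : Type) (F : I -> set (Omega Gamma)) :
  countable [set: I] -> (forall i, event_A (F i)) ->
  event_A_delta (\bigcap_i F i).
Proof.
move=> /Pcountable[J eIJ]; subst I => AF.
pose F' n := if unpickle n is Some i then F i else [set: Omega Gamma].
exists F'; split=> [n|].
  by rewrite /F'; case: unpickle => [i|]; [exact: AF | exact: event_A_setT].
apply/seteqP; split=> w Fw n _.
  by rewrite /F'; case: unpickle => // i; exact: Fw.
by have := Fw (pickle n) I; rewrite /F' pickleK.
Qed.

Lemma countable_ffun_sigT : countable [set: S] ->
  countable [set: {k : nat & {ffun 'I_k.+1 -> S}}].
Proof. by move=> /Pcountable[T eST]; subst S; exact: countableP. Qed.

End Events.

Section Meets.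
Variables (R : realType) (H : lmodType R[i]) (ip : H -> H -> R[i]).
Variables (S : Type) (Gamma : S -> countType).
Variables (p : forall t : S, Gamma t -> H -> H) (phi : H).

Definition meet_nonzero {k} (ts : 'I_k -> S) : set (Omega Gamma) :=
  [set w | forall q, is_meet ip (fun i => p (ts i) (w (ts i))) q -> q phi <> 0].

Lemma event_A_meet_nonzero k (ts : 'I_k -> S) : event_A (meet_nonzero ts).
Proof.
by exists k, ts, [set v | forall q,
  is_meet ip (fun i => p (ts i) (v i)) q -> q phi <> 0].
Qed.

Lemma Omega_phi_bigcap :
  Omega_phi ip p phi =
  \bigcap_(x : {k : nat & {ffun 'I_k.+1 -> S}}) meet_nonzero (projT2 x).
Proof.
apply/seteqP; split=> w Ow; first by case=> k ts _; exact: Ow.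
move=> k ts; have := Ow (Tagged _ [ffun i => ts i]) I.
by rewrite /meet_nonzero /=; under [fun i => _]funext do rewrite ffunE.
Qed.

End Meets.

Theorem lemma5 (R : realType) (H : lmodType R[i]) (ip : H -> H -> R[i])
  (S : Type) (Gamma : S -> countType) (p : forall t : S, Gamma t -> H -> H) :
  hilbert_space ip ->
  (forall t : S, resolution_of_identity ip (p t)) ->
  countable [set: S] ->
  forall phi : H, event_A_delta (Omega_phi ip p phi).
Proof.
move=> _ _ cS phi; rewrite Omega_phi_bigcap.
apply: event_A_delta_bigcap; first exact: countable_ffun_sigT.
by move=> x; exact: event_A_meet_nonzero.
Qed.
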